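(* Every closed directed family $\mathcal P\subset\nabla$ is cross modal.
   Context: $\nabla=\{(\lambda,\boldsymbol p):\lambda\ge0,\ 1\ge p_1\ge p_2\ge\dots\ge0,\ \sum_ip_i<\infty\}$, partially ordered componentwise. For $(\lambda,\boldsymbol p)\in\nabla$, $f(k;\lambda,\boldsymbol p)$ is the probability that $X+\sum_iB_i=k$ where $X\sim\mathrm{Poisson}(\lambda)$, $B_i\sim\mathrm{Bernoulli}(p_i)$ are independent, with $f(-1;\cdot)=0$. $\nabla$ carries the topology in which $(\lambda_j,\boldsymbol p_j)\to(\lambda,\boldsymbol p)$ iff $f(k;\lambda_j,\boldsymbol p_j)\to f(k;\lambda,\boldsymbol p)$ for all $k$; closed refers to this topology. The leading mode $m_+(\lambda,\boldsymbol p)$ is the unique integer $k$ with $f(k-1)\le f(k)>f(k+1)$; $m_-=m_+$ unless $f(m_+-1)=f(m_+)$, in which case $m_-=m_+-1$; the modes are the points where $f(\cdot;\lambda,\boldsymbol p)$ is maximal. A family $\mathcal P\subset\nabla$ is directed if $(0,\boldsymbol 0)\in\mathcal P$ and for every $k\ge0$: (a) for each $(\lambda,\boldsymbol p)\in\mathcal P$ with $m_+(\lambda,\boldsymbol p)=k$ there is $(\lambda',\boldsymbol p')\in\mathcal P$ with $(\lambda',\boldsymbol p')\ge(\lambda,\boldsymbol p)$, $m_+(\lambda',\boldsymbol p')=k+1$ and $f(k+1;\lambda',\boldsymbol p')>f(k+1;\lambda,\boldsymbol p)$; (b) for each $(\lambda,\boldsymbol p)\in\mathcal P$ with $m_-(\lambda,\boldsymbol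 p)=k+1$ there is $(\lambda',\boldsymbol p')\in\mathcal P$ with $(\lambda,\boldsymbol p)\ge(\lambda',\boldsymbol p')$, $m_-(\lambda',\boldsymbol p')=k$ and $f(k;\lambda,\boldsymbol p)<f(k;\lambda',\boldsymbol p')$. The family $\mathcal P$ is cross modal if for every $k\ge0$ the likelihood $(\lambda,\boldsymbol p)\mapsto f(k;\lambda,\boldsymbol p)$ attains its maximum over $\mathcal P$ and for every maximiser, $k$ is a mode of $f(\cdot;\lambda,\boldsymbol p)$. *)

From Stdlib Require Import Reals Lra.
From Coquelicot Require Import Coquelicot.
Open Scope R_scope.

(* A point of nabla: a pair (lambda, p) with p : nat -> R (p 0 = p_1, ...). *)
Definition point := (R * (nat -> R))%type.

Definition in_nabla (x : point) : Prop :=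
  let (l, p) := x in
  0 <= l /\ p 0%nat <= 1 /\
  (forall i, p (S i) <= p i) /\ (forall i, 0 <= p i) /\ ex_series p.

Definition ple (x y : point) : Prop :=
  fst x <= fst y /\ forall i, snd x i <= snd y i.

Definition poisson_pmf (l : R) (k : nat) : R :=
  exp (- l) * l ^ k / INR (Factorial.fact k).

(* pmf of X + B_0 + ... + B_{n-1}, X ~ Poisson(l), B_i ~ Bernoulli(p i) *)
Fixpoint fn (l : R) (p : nat -> R) (n : nat) (k : nat) : R :=
  match n with
  | O => poisson_pmf l k
  | S n' =>
      (1 - p n') * fn l p n' k +
      p n' * (match k with O => 0 | S k' => fn l p n' k' end)
  end.

(* f(k; lambda, p) = P(X + sum_i B_i = k), the limit of the finite partial
   convolutions (sum_i B_i is a.s. finite since sum_i p_i < oo). *)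
Definition f (k : nat) (x : point) : R :=
  real (Lim_seq (fun n => fn (fst x) (snd x) n k)).

Definition fpred (k : nat) (x : point) : R :=
  match k with O => 0 | S k' => f k' x end.

Definition is_mplus (x : point) (k : nat) : Prop :=
  fpred k x <= f k x /\ f k x > f (S k) x.

Definition is_mminus (x : point) (k : nat) : Prop :=
  exists m, is_mplus x m /\
    ((fpred m x = f m x /\ k = Nat.pred m) \/ (fpred m x <> f m x /\ k = m)).

Definition is_mode (x : point) (k : nat) : Prop :=
  forall j, f j x <= f k x.

Definition zero_point : point := (0, fun _ => 0).

Definition closed_fam (P : point -> Prop) : Prop :=
  forall (xs : nat -> point) (x : point),
    (forall j, P (xs j)) -> in_nabla x ->
    (forall k, is_lim_seq (fun j => f k (xs j)) (f k x)) -> P x.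

Definition directed (P : point -> Prop) : Prop :=
  P zero_point /\
  forall k : nat,
    (forall x, P x -> is_mplus x k ->
       exists x', P x' /\ ple x x' /\ is_mplus x' (S k) /\ f (S k) x' > f (S k) x) /\
    (forall x, P x -> is_mminus x (S k) ->
       exists x', P x' /\ ple x' x /\ is_mminus x' k /\ f k x < f k x').

Definition cross_modal (P : point -> Prop) : Prop :=
  forall k : nat,
    (exists x, P x /\ forall y, P y -> f k y <= f k x) /\
    (forall x, P x -> (forall y, P y -> f k y <= f k x) -> is_mode x k).

(* If x <= x' in nabla then x' dominates x in likelihood ratio: for every shift s >= 0 the
   ratio f(k - s; x') / f(k; x) is nondecreasing in k.  This holds for Poisson laws, survives
   every Bernoulli convolution and hence passes to the limit f.  With x = x' and s = 1 it says
   that f(.; x) is log-concave, so its leading mode is a mode.  If x maximises f(k) over P but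
   its leading mode m is below k, directedness gives x' >= x in P with a larger f(m + 1), and
   monotonicity of f(.; x') / f(.; x) between m + 1 and k forces f(k; x') > f(k; x); the case
   m_- > k is symmetric.

   The maximum is attained by compactness.  A lower bound f(k; y) >= c > 0 bounds
   lambda + sum p (evaluate the generating function at 1/2), so along a maximising sequence
   lambda, sum_i p_i and every p_i converge after a diagonal extraction.  As the p_i are
   nonincreasing, the Bernoulli variables of large index are uniformly small and, by Le Cam's
   inequality, jointly close to a Poisson variable of the same mean; hence f converges to its
   value at the point whose lambda absorbs the mass lost in the limit, which lies in P by
   closedness. *)

From Stdlib Require Import Reals Lra Lia ZArith Classical ClassicalEpsilon.
From Coquelicot Require Import Coquelicot.
Open Scope R_scope.

Definition in01 (g : nat -> R) : Prop := forall k, 0 <= g k <= 1.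

Fixpoint psum (a : nat -> R) (n : nat) : R :=
  match n with O => 0 | S n' => psum a n' + a n' end.

Lemma psum_S a n : psum a (S n) = psum a n + a n.
Proof. reflexivity. Qed.

Lemma psum_ext a b n : (forall j, a j = b j) -> psum a n = psum b n.
Proof. intros H; induction n; simpl; auto; rewrite IHn, H; auto. Qed.

Lemma psum_scal c a n : psum (fun j => c * a j) n = c * psum a n.
Proof. induction n; simpl; [ring|]; rewrite IHn; ring. Qed.

Lemma psum_nonneg a n : (forall i, 0 <= a i) -> 0 <= psum a n.
Proof. intros H; induction n; simpl; [lra|]; specialize (H n); lra. Qed.

Lemma psum_le_psum a n m : (forall i, 0 <= a i) -> (n <= m)%nat -> psum a n <= psum a m.
Proof. intros H Hnm; induction Hnm; [lra|]; simpl; specialize (H m); lra. Qed.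

Lemma psum_ge_term a n j : (forall i, 0 <= a i) -> (j < n)%nat -> a j <= psum a n.
Proof.
  intros H Hj.
  pose proof (psum_le_psum a (S j) n H Hj); pose proof (psum_nonneg a j H); simpl in *; lra.
Qed.

Lemma psum_zero n : psum (fun _ => 0) n = 0.
Proof. induction n; simpl; [|rewrite IHn]; ring. Qed.

Lemma psum_sum_n a n : psum a (S n) = sum_n a n.
Proof.
  induction n; [rewrite sum_O; simpl; ring|].
  rewrite sum_Sn, <- IHn; reflexivity.
Qed.

Lemma is_lim_seq_Rle u v (a b : R) :
  (forall n, u n <= v n) -> is_lim_seq u a -> is_lim_seq v b -> a <= b.
Proof. exact (is_lim_seq_le u v a b). Qed.

Lemma is_lim_seq_Rle_const u (a c : R) : (forall n, u n <= c) -> is_lim_seq u a -> a <= c.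
Proof. intros H Hu; exact (is_lim_seq_Rle u _ a c H Hu (is_lim_seq_const c)). Qed.

Lemma is_lim_seq_Rge_const u (a c : R) : (forall n, c <= u n) -> is_lim_seq u a -> c <= a.
Proof. intros H Hu; exact (is_lim_seq_Rle _ u c a H (is_lim_seq_const c) Hu). Qed.

Lemma is_lim_seq_R_unique u (a b : R) : is_lim_seq u a -> is_lim_seq u b -> a = b.
Proof.
  intros Ha Hb; apply is_lim_seq_unique in Ha; apply is_lim_seq_unique in Hb.
  rewrite Ha in Hb; injection Hb; auto.
Qed.

Lemma is_lim_seq_of_Rabs_le (v w : nat -> R) (V : R) :
  (forall n, Rabs (v n - V) <= w n) -> is_lim_seq w 0 -> is_lim_seq v V.
Proof.
  intros H Hw.
  apply is_lim_seq_le_le with (fun n => V - w n) (fun n => V + w n).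
  - intros n; specialize (H n); apply Rabs_le_between in H; lra.
  - replace (Finite V) with (Finite (V - 0)) by (f_equal; ring).
    apply is_lim_seq_minus'; [apply is_lim_seq_const | auto].
  - replace (Finite V) with (Finite (V + 0)) by (f_equal; ring).
    apply is_lim_seq_plus'; [apply is_lim_seq_const | auto].
Qed.

Lemma is_lim_seq_of_approx (v : nat -> R) (V : R) (e : nat -> R) (d : nat -> nat -> R) :
  (forall N n, Rabs (v n - V) <= e N + d N n) ->
  is_lim_seq e 0 -> (forall N, is_lim_seq (d N) 0) -> is_lim_seq v V.
Proof.
  intros H He Hd; apply is_lim_seq_spec; intros eps.
  assert (Heps : 0 < eps / 2) by (destruct eps; simpl; lra).
  apply is_lim_seq_spec in He; destruct (He (mkposreal _ Heps)) as [N HN].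
  specialize (Hd N); apply is_lim_seq_spec in Hd; destruct (Hd (mkposreal _ Heps)) as [M HM].
  exists M; intros n Hn.
  specialize (HN N (Nat.le_refl N)); specialize (HM n Hn); specialize (H N n); simpl in *.
  rewrite Rminus_0_r in HN, HM; apply Rabs_def2 in HN; apply Rabs_def2 in HM; lra.
Qed.

Lemma is_lim_seq_inv_S : is_lim_seq (fun n => / INR (S n)) 0.
Proof.
  apply (is_lim_seq_incr_1 (fun n => / INR n)).
  replace (Finite 0) with (Rbar_inv p_infty) by reflexivity.
  apply is_lim_seq_inv; [apply is_lim_seq_INR | discriminate].
Qed.

Lemma is_lim_seq_psum (u : nat -> nat -> R) (v : nat -> R) n :
  (forall j, is_lim_seq (fun m => u m j) (v j)) ->
  is_lim_seq (fun m => psum (u m) n) (psum v n).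
Proof.
  intros H; induction n; simpl; [apply is_lim_seq_const|].
  apply is_lim_seq_plus'; auto.
Qed.

Lemma is_lim_seq_psum_Series a : ex_series a -> is_lim_seq (psum a) (Series a).
Proof.
  intros H; apply Series_correct in H; apply is_lim_seq_incr_1.
  eapply is_lim_seq_ext; [|apply H]; intros; rewrite psum_sum_n; auto.
Qed.

Lemma psum_le_Series a n : ex_series a -> (forall i, 0 <= a i) -> psum a n <= Series a.
Proof.
  intros Ha Hpos.
  pose proof (proj1 (is_lim_seq_incr_n _ n _) (is_lim_seq_psum_Series a Ha)) as Hlim.
  revert Hlim; apply is_lim_seq_Rge_const.
  intros m; apply psum_le_psum; auto; lia.
Qed.

Lemma ex_lim_seq_of_summable_steps u b :
  (forall n, Rabs (u (S n) - u n) <= b n) -> ex_series b -> exists L : R, is_lim_seq u L.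
Proof.
  intros Hb Hs.
  destruct (@ex_series_le R_AbsRing R_CompleteNormedModule (fun n => u (S n) - u n) b Hb Hs)
    as [L HL].
  exists (u O + L); apply is_lim_seq_incr_1.
  assert (Htele : forall n, u (S n) = u O + psum (fun n => u (S n) - u n) (S n)).
  { induction n; [simpl; ring|]; rewrite psum_S; lra. }
  eapply is_lim_seq_ext; [intros n; symmetry; apply Htele|].
  apply is_lim_seq_plus'; [apply is_lim_seq_const|].
  apply is_lim_seq_ext with (sum_n (fun n => u (S n) - u n)); [|exact HL].
  intros; rewrite psum_sum_n; auto.
Qed.

Lemma decreasing_mul_le_psum p N : Un_decreasing p -> INR (S N) * p N <= psum p (S N).
Proof.
  intros Hd.
  assert (H : forall m, (m <= S N)%nat -> INR m * p N <= psum p m).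
  { induction m as [|m IH]; intros Hm; [simpl; lra|].
    rewrite S_INR, psum_S.
    pose proof (decreasing_prop p m N Hd ltac:(lia)); specialize (IH ltac:(lia)); lra. }
  apply H; lia.
Qed.

Lemma decreasing_le_Series_div p N C : Un_decreasing p -> ex_series p ->
  (forall i, 0 <= p i) -> Series p <= C -> p N <= C / INR (S N).
Proof.
  intros Hd Hs Hpos HC.
  assert (HSN : 0 < INR (S N)) by (apply lt_0_INR; lia).
  pose proof (decreasing_mul_le_psum p N Hd); pose proof (psum_le_Series p (S N) Hs Hpos).
  apply Rmult_le_reg_l with (INR (S N)); auto; field_simplify; lra.
Qed.

Lemma psum_sq_tail_le p N d : Un_decreasing p -> in01 p ->
  psum (fun i => p i ^ 2) (N + d) - psum (fun i => p i ^ 2) N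
  <= p N * (psum p (N + d) - psum p N).
Proof.
  intros Hd Hp; induction d as [|d IH].
  - rewrite Nat.add_0_r, !Rminus_diag; lra.
  - rewrite Nat.add_succ_r, !psum_S.
    pose proof (decreasing_prop p N (N + d) Hd ltac:(lia)); pose proof (Hp (N + d)%nat).
    assert (p (N + d)%nat ^ 2 <= p N * p (N + d)%nat) by nra; lra.
Qed.

Lemma exp_le_exp x y : x <= y -> exp x <= exp y.
Proof. intros [H | ->]; [left; apply exp_increasing | right]; auto. Qed.

Lemma exp_ge_psum x n : 0 <= x -> psum (fun j => x ^ j / INR (Factorial.fact j)) n <= exp x.
Proof.
  intros Hx; destruct n as [|n]; [simpl; left; apply exp_pos|].
  rewrite psum_sum_n, sum_n_Reals.
  replace (sum_f_R0 (fun j => x ^ j / INR (Factorial.fact j)) n)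
    with (sum_f_R0 (fun i => / INR (Factorial.fact i) * x ^ i) n)
    by (apply sum_eq; intros; unfold Rdiv; ring).
  apply sum_incr.
  - unfold exp; destruct (exist_exp x); auto.
  - intros; apply Rmult_le_pos; [left; apply Rinv_0_lt_compat, INR_fact_lt_0|].
    apply pow_le; auto.
Qed.

(** * Bernoulli convolutions *)

Definition delay (g : nat -> R) (k : nat) : R :=
  match k with O => 0 | S k' => g k' end.

Definition bern_conv (q : R) (g : nat -> R) (k : nat) : R :=
  (1 - q) * g k + q * delay g k.

Fixpoint bern_convs (g p : nat -> R) (n : nat) : nat -> R :=
  match n with O => g | S n' => bern_conv (p n') (bern_convs g p n') end.

Lemma fn_bern_convs l p n k : fn l p n k = bern_convs (poisson_pmf l) p n k.
Proof.
  revert k; induction n as [|n IH]; intros k; simpl; auto.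
  unfold bern_conv, delay; destruct k; rewrite !IH; auto.
Qed.

Lemma delay_in01 g : in01 g -> in01 (delay g).
Proof. intros H [|k]; simpl; [lra | apply H]. Qed.

Lemma bern_conv_in01 q g : 0 <= q <= 1 -> in01 g -> in01 (bern_conv q g).
Proof.
  intros Hq Hg k; unfold bern_conv.
  pose proof (Hg k); pose proof (delay_in01 g Hg k); split; nra.
Qed.

Lemma bern_convs_in01 g p n : in01 g -> in01 p -> in01 (bern_convs g p n).
Proof. intros Hg Hp; induction n; simpl; auto using bern_conv_in01. Qed.

Lemma bern_conv_ext q g h k : (forall k, g k = h k) -> bern_conv q g k = bern_conv q h k.
Proof. intros H; unfold bern_conv, delay; destruct k; rewrite !H; auto. Qed.

Lemma bern_conv_comm q r g k :
  bern_conv q (bern_conv r g) k = bern_conv r (bern_conv q g) k.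
Proof. unfold bern_conv, delay; destruct k; ring. Qed.

Lemma bern_conv_bern_convs q g p n k :
  bern_conv q (bern_convs g p n) k = bern_convs (bern_conv q g) p n k.
Proof.
  revert k; induction n as [|n IH]; intros k; simpl; auto.
  rewrite bern_conv_comm; apply bern_conv_ext; auto.
Qed.

Lemma bern_conv_nonexpansive q g h E : 0 <= q <= 1 ->
  (forall k, Rabs (g k - h k) <= E) ->
  forall k, Rabs (bern_conv q g k - bern_conv q h k) <= E.
Proof.
  intros Hq H k; unfold bern_conv.
  assert (Hdelay : Rabs (delay g k - delay h k) <= E).
  { destruct k; simpl; [|apply H].
    rewrite Rminus_0_r, Rabs_R0; apply Rle_trans with (Rabs (g O - h O));
      [apply Rabs_pos | apply H]. }
  replace ((1 - q) * g k + q * delay g k - ((1 - q) * h k + q * delay h k))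
    with ((1 - q) * (g k - h k) + q * (delay g k - delay h k)) by ring.
  eapply Rle_trans; [apply Rabs_triang|].
  rewrite !Rabs_mult, (Rabs_pos_eq (1 - q)), (Rabs_pos_eq q) by lra.
  specialize (H k); nra.
Qed.

Lemma bern_convs_nonexpansive g h p n E : in01 p ->
  (forall k, Rabs (g k - h k) <= E) ->
  forall k, Rabs (bern_convs g p n k - bern_convs h p n k) <= E.
Proof. intros Hp H; induction n; simpl; auto using bern_conv_nonexpansive. Qed.

Lemma bern_conv_lipschitz q r g k : in01 g ->
  Rabs (bern_conv q g k - bern_conv r g k) <= Rabs (q - r).
Proof.
  intros Hg; unfold bern_conv.
  replace ((1 - q) * g k + q * delay g k - ((1 - r) * g k + r * delay g k))
    with ((q - r) * (delay g k - g k)) by ring.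
  rewrite Rabs_mult.
  pose proof (Hg k); pose proof (delay_in01 g Hg k).
  assert (Rabs (delay g k - g k) <= 1) by (apply Rabs_le; lra).
  pose proof (Rabs_pos (q - r)); nra.
Qed.

Lemma bern_convs_lipschitz g h p q n E : in01 g -> in01 h -> in01 p -> in01 q ->
  (forall k, Rabs (g k - h k) <= E) ->
  forall k, Rabs (bern_convs g p n k - bern_convs h q n k)
            <= E + psum (fun i => Rabs (p i - q i)) n.
Proof.
  intros Hg Hh Hp Hq H; induction n as [|n IH]; intros k; simpl.
  - rewrite Rplus_0_r; auto.
  - pose proof (bern_conv_nonexpansive (p n) _ _ _ (Hp n) IH k).
    pose proof (bern_conv_lipschitz (p n) (q n) (bern_convs h q n) k
                  (bern_convs_in01 h q n Hh Hq)).
    set (a := bern_conv (p n) (bern_convs g p n) k) in *.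
    set (b := bern_conv (p n) (bern_convs h q n) k) in *.
    set (c := bern_conv (q n) (bern_convs h q n) k) in *.
    replace (a - c) with ((a - b) + (b - c)) by ring.
    pose proof (Rabs_triang (a - b) (b - c)); lra.
Qed.

Lemma bern_convs_step g p n k : in01 g -> in01 p ->
  Rabs (bern_convs g p (S n) k - bern_convs g p n k) <= p n.
Proof.
  intros Hg Hp.
  pose proof (bern_conv_lipschitz (p n) 0 (bern_convs g p n) k (bern_convs_in01 g p n Hg Hp)).
  simpl; unfold bern_conv in *.
  replace ((1 - 0) * bern_convs g p n k + 0 * delay (bern_convs g p n) k)
    with (bern_convs g p n k) in H by ring.
  rewrite Rminus_0_r, (Rabs_pos_eq (p n)) in H by apply Hp; auto.
Qed.

(** * Generating functions *)

Definition gen_psum (z : R) (g : nat -> R) (n : nat) : R := psum (fun j => z ^ j * g j) n.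

Lemma gen_psum_nonneg z g n : 0 <= z -> (forall k, 0 <= g k) -> 0 <= gen_psum z g n.
Proof. intros Hz Hg; apply psum_nonneg; intros; apply Rmult_le_pos; auto using pow_le. Qed.

Lemma gen_psum_one g n : gen_psum 1 g n = psum g n.
Proof. apply psum_ext; intros; rewrite pow1; ring. Qed.

Lemma gen_psum_delay z g n : 0 <= z -> (forall k, 0 <= g k) ->
  gen_psum z (delay g) n <= z * gen_psum z g n.
Proof.
  intros Hz Hg.
  assert (Hshift : forall m, gen_psum z (delay g) (S m) = z * gen_psum z g m).
  { unfold gen_psum; induction m; simpl in *; [ring|]; rewrite IHm; ring. }
  destruct n as [|n]; [unfold gen_psum; simpl; lra|].
  rewrite Hshift; apply Rmult_le_compat_l; auto.
  unfold gen_psum; simpl; pose proof (pow_le z n Hz); pose proof (Hg n); nra.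
Qed.

Lemma gen_psum_bern_conv z q g n : 0 <= z <= 1 -> 0 <= q <= 1 -> (forall k, 0 <= g k) ->
  gen_psum z (bern_conv q g) n <= exp (- (q * (1 - z))) * gen_psum z g n.
Proof.
  intros Hz Hq Hg.
  assert (Hsplit : gen_psum z (bern_conv q g) n
                   = (1 - q) * gen_psum z g n + q * gen_psum z (delay g) n).
  { unfold gen_psum, bern_conv; induction n; simpl; [ring|]; rewrite IHn; ring. }
  pose proof (gen_psum_delay z g n (proj1 Hz) Hg).
  pose proof (gen_psum_nonneg z g n (proj1 Hz) Hg).
  pose proof (exp_ineq1_le (- (q * (1 - z)))).
  rewrite Hsplit.
  apply Rle_trans with ((1 - q * (1 - z)) * gen_psum z g n); [nra|].
  apply Rmult_le_compat_r; lra.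
Qed.

Lemma gen_psum_bern_convs z g p n m B : 0 <= z <= 1 -> in01 g -> in01 p ->
  (forall m, gen_psum z g m <= B) ->
  gen_psum z (bern_convs g p n) m <= B * exp (- (1 - z) * psum p n).
Proof.
  intros Hz Hg Hp HB; induction n as [|n IH]; simpl.
  - rewrite Rmult_0_r, exp_0, Rmult_1_r; auto.
  - eapply Rle_trans.
    { apply gen_psum_bern_conv; auto.
      intros; apply (bern_convs_in01 g p n Hg Hp). }
    replace (- (1 - z) * (psum p n + p n)) with (- (p n * (1 - z)) + - (1 - z) * psum p n)
      by ring.
    rewrite exp_plus.
    pose proof (exp_pos (- (p n * (1 - z)))); nra.
Qed.

Lemma poisson_pmf_nonneg l k : 0 <= l -> 0 <= poisson_pmf l k.
Proof.
  intros Hl; unfold poisson_pmf.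
  pose proof (exp_pos (- l)); pose proof (pow_le l k Hl).
  pose proof (Rinv_0_lt_compat _ (INR_fact_lt_0 k)).
  unfold Rdiv; apply Rmult_le_pos; [apply Rmult_le_pos|]; lra.
Qed.

Lemma gen_psum_poisson z l n : 0 <= z -> 0 <= l ->
  gen_psum z (poisson_pmf l) n <= exp (- (1 - z) * l).
Proof.
  intros Hz Hl; unfold gen_psum, poisson_pmf.
  rewrite (psum_ext _ (fun j => exp (- l) * ((z * l) ^ j / INR (Factorial.fact j))))
    by (intros; rewrite Rpow_mult_distr; unfold Rdiv; ring).
  rewrite psum_scal.
  pose proof (exp_ge_psum (z * l) n ltac:(nra)); pose proof (exp_pos (- l)).
  replace (- (1 - z) * l) with (- l + z * l) by ring.
  rewrite exp_plus; nra.
Qed.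

(** * Poisson laws and Le Cam's inequality *)

Lemma poisson_pmf_in01 l : 0 <= l -> in01 (poisson_pmf l).
Proof.
  intros Hl k; split; [apply poisson_pmf_nonneg; auto|].
  pose proof (gen_psum_poisson 1 l (S k) ltac:(lra) Hl) as H.
  replace (- (1 - 1) * l) with 0 in H by ring.
  rewrite gen_psum_one, exp_0 in H.
  pose proof (psum_ge_term (poisson_pmf l) (S k) k
                (fun i => poisson_pmf_nonneg l i Hl) (Nat.lt_succ_diag_r k)); lra.
Qed.

Lemma poisson_pmf_derive k x :
  is_derive (fun y => poisson_pmf y k) x (delay (poisson_pmf x) k - poisson_pmf x k).
Proof.
  unfold poisson_pmf; auto_derive; auto.
  destruct k as [|k]; simpl delay; [simpl; field|].
  replace (Init.Nat.pred (S k)) with k by auto.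
  change (Factorial.fact (S k)) with (S k * Factorial.fact k)%nat.
  rewrite mult_INR; pose proof (INR_fact_lt_0 k); pose proof (pos_INR k).
  rewrite S_INR; simpl pow; field; lra.
Qed.

Lemma poisson_pmf_lipschitz k a b : 0 <= a -> 0 <= b ->
  Rabs (poisson_pmf a k - poisson_pmf b k) <= Rabs (a - b).
Proof.
  intros Ha Hb.
  destruct (MVT_gen (fun y => poisson_pmf y k) b a
              (fun x => delay (poisson_pmf x) k - poisson_pmf x k)) as [c [Hc ->]].
  - intros; apply poisson_pmf_derive.
  - intros; apply continuity_pt_filterlim, (ex_derive_continuous (fun y => poisson_pmf y k)).
    eexists; apply poisson_pmf_derive.
  - rewrite Rabs_mult; rewrite <- (Rmult_1_l (Rabs (a - b))) at 2.
    apply Rmult_le_compat_r; [apply Rabs_pos|].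
    assert (Hc0 : 0 <= c) by (pose proof (Rmin_glb b a 0 Hb Ha); lra).
    pose proof (poisson_pmf_in01 c Hc0 k); pose proof (delay_in01 _ (poisson_pmf_in01 c Hc0) k).
    apply Rabs_le; lra.
Qed.

Lemma delay_poisson_pmf_lipschitz k a b : 0 <= a -> 0 <= b ->
  Rabs (delay (poisson_pmf a) k - delay (poisson_pmf b) k) <= Rabs (a - b).
Proof.
  intros; destruct k; simpl; [|apply poisson_pmf_lipschitz; auto].
  rewrite Rminus_0_r, Rabs_R0; apply Rabs_pos.
Qed.

Lemma is_derive_poisson_pmf_sub_bern_conv a k t :
  is_derive (fun t => poisson_pmf (a + t) k - bern_conv t (poisson_pmf a) k) t
    ((delay (poisson_pmf (a + t)) k - poisson_pmf (a + t) k)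
     - (delay (poisson_pmf a) k - poisson_pmf a k)).
Proof.
  assert (H1 : is_derive (fun t => poisson_pmf (a + t) k) t
                 (delay (poisson_pmf (a + t)) k - poisson_pmf (a + t) k)).
  { pose proof (is_derive_comp (fun y => poisson_pmf y k) (fun t => a + t) t _ 1
                  (poisson_pmf_derive k (a + t))) as H.
    unfold scal in H; simpl in H; unfold mult in H; simpl in H; rewrite Rmult_1_l in H.
    apply H; auto_derive; auto; ring. }
  assert (H2 : is_derive (fun t => bern_conv t (poisson_pmf a) k) t
                 (delay (poisson_pmf a) k - poisson_pmf a k))
    by (unfold bern_conv; auto_derive; auto; ring).
  exact (is_derive_minus _ _ _ _ _ H1 H2).
Qed.

Lemma bern_conv_poisson_approx a q k : 0 <= a -> 0 <= q ->
  Rabs (bern_conv q (poisson_pmf a) k - poisson_pmf (a + q) k) <= 2 * q ^ 2.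
Proof.
  intros Ha Hq.
  set (err := fun t => poisson_pmf (a + t) k - bern_conv t (poisson_pmf a) k).
  set (derr := fun t => (delay (poisson_pmf (a + t)) k - poisson_pmf (a + t) k)
                        - (delay (poisson_pmf a) k - poisson_pmf a k)).
  assert (Hd : forall t, is_derive err t (derr t))
    by (intros; apply is_derive_poisson_pmf_sub_bern_conv).
  destruct (MVT_gen err 0 q derr) as [c [Hc Heq]].
  - intros; apply Hd.
  - intros; apply continuity_pt_filterlim, (ex_derive_continuous err); eexists; apply Hd.
  - rewrite Rmin_left, Rmax_right in Hc by lra.
    assert (Herr0 : err 0 = 0) by (unfold err, bern_conv; rewrite Rplus_0_r; ring).
    assert (Hb : Rabs (derr c) <= 2 * q).
    { pose proof (delay_poisson_pmf_lipschitz k (a + c) a ltac:(lra) Ha).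
      pose proof (poisson_pmf_lipschitz k (a + c) a ltac:(lra) Ha).
      replace (a + c - a) with c in * by ring.
      rewrite (Rabs_pos_eq c) in * by lra.
      unfold derr.
      replace (delay (poisson_pmf (a + c)) k - poisson_pmf (a + c) k
               - (delay (poisson_pmf a) k - poisson_pmf a k))
        with ((delay (poisson_pmf (a + c)) k - delay (poisson_pmf a) k)
              - (poisson_pmf (a + c) k - poisson_pmf a k)) by ring.
      unfold Rminus at 1; eapply Rle_trans; [apply Rabs_triang|].
      rewrite Rabs_Ropp; lra. }
    replace (bern_conv q (poisson_pmf a) k - poisson_pmf (a + q) k) with (- (err q - err 0))
      by (rewrite Herr0; unfold err; ring).
    rewrite Rabs_Ropp, Heq, Rabs_mult, Rminus_0_r, (Rabs_pos_eq q) by lra.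
    pose proof (Rabs_pos (derr c)); nra.
Qed.

Lemma bern_convs_poissonize_tail l p N d k : 0 <= l -> in01 p ->
  Rabs (bern_convs (poisson_pmf l) p (N + d) k
        - bern_convs (poisson_pmf (l + (psum p (N + d) - psum p N))) p N k)
  <= 2 * (psum (fun i => p i ^ 2) (N + d) - psum (fun i => p i ^ 2) N).
Proof.
  intros Hl Hp; revert k; induction d as [|d IH]; intros k.
  - rewrite Nat.add_0_r, Rminus_diag, Rplus_0_r, Rminus_diag, Rabs_R0; lra.
  - rewrite Nat.add_succ_r, !psum_S; cbv beta; simpl bern_convs.
    set (n := (N + d)%nat) in *.
    set (a := l + (psum p n - psum p N)) in *.
    assert (Ha : 0 <= a).
    { pose proof (psum_le_psum p N n (fun i => proj1 (Hp i)) ltac:(unfold n; lia)).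
      unfold a; lra. }
    pose proof (bern_conv_nonexpansive (p n) _ _ _ (Hp n) IH k) as H1.
    rewrite (bern_conv_bern_convs (p n) (poisson_pmf a)) in H1.
    assert (H2 : Rabs (bern_convs (bern_conv (p n) (poisson_pmf a)) p N k
                       - bern_convs (poisson_pmf (a + p n)) p N k) <= 2 * p n ^ 2).
    { apply bern_convs_nonexpansive; auto.
      intros; apply bern_conv_poisson_approx; auto; apply Hp. }
    replace (l + (psum p n + p n - psum p N)) with (a + p n) by (unfold a; ring).
    set (u := bern_conv (p n) (bern_convs (poisson_pmf l) p n) k) in *.
    set (v := bern_convs (bern_conv (p n) (poisson_pmf a)) p N k) in *.
    set (w := bern_convs (poisson_pmf (a + p n)) p N k) in *.
    replace (u - w) with ((u - v) + (v - w)) by ring.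
    pose proof (Rabs_triang (u - v) (v - w)); lra.
Qed.

(** * The law f on nabla *)

Lemma nabla_lambda x : in_nabla x -> 0 <= fst x.
Proof. destruct x; intros [H _]; auto. Qed.

Lemma nabla_decreasing x : in_nabla x -> Un_decreasing (snd x).
Proof. destruct x; intros (_ & _ & H & _); auto. Qed.

Lemma nabla_in01 x : in_nabla x -> in01 (snd x).
Proof.
  destruct x as [l p]; intros (_ & H0 & Hd & Hpos & _) i; split; auto.
  pose proof (decreasing_prop p 0 i Hd ltac:(lia)); simpl; lra.
Qed.

Lemma nabla_summable x : in_nabla x -> ex_series (snd x).
Proof. destruct x; intros (_ & _ & _ & _ & H); auto. Qed.

Lemma nabla_Series_nonneg x : in_nabla x -> 0 <= Series (snd x).
Proof.
  intros Hx; apply (psum_le_Series _ 0 (nabla_summable x Hx)).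
  intros i; apply (nabla_in01 x Hx).
Qed.

Lemma f_is_lim x k : in_nabla x -> is_lim_seq (fun n => fn (fst x) (snd x) n k) (f k x).
Proof.
  intros Hx.
  destruct (ex_lim_seq_of_summable_steps (fun n => fn (fst x) (snd x) n k) (snd x))
    as [L HL].
  - intros n; rewrite !fn_bern_convs; apply bern_convs_step.
    + apply poisson_pmf_in01, nabla_lambda, Hx.
    + apply nabla_in01, Hx.
  - apply nabla_summable, Hx.
  - unfold f; rewrite (is_lim_seq_unique _ _ HL); auto.
Qed.

Lemma f_in01 x : in_nabla x -> in01 (fun k => f k x).
Proof.
  intros Hx k.
  assert (H : forall n, 0 <= fn (fst x) (snd x) n k <= 1).
  { intros n; rewrite fn_bern_convs; apply bern_convs_in01.
    - apply poisson_pmf_in01, nabla_lambda, Hx.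
    - apply nabla_in01, Hx. }
  pose proof (f_is_lim x k Hx) as Hlim; split;
    [apply (is_lim_seq_Rge_const _ _ 0 (fun n => proj1 (H n)) Hlim)
    |apply (is_lim_seq_Rle_const _ _ 1 (fun n => proj2 (H n)) Hlim)].
Qed.

Lemma f_gen_psum_le z x N n : 0 <= z <= 1 -> in_nabla x ->
  gen_psum z (fun k => f k x) n <= exp (- (1 - z) * (fst x + psum (snd x) N)).
Proof.
  intros Hz Hx.
  pose proof (nabla_lambda x Hx) as Hl; pose proof (nabla_in01 x Hx) as Hp.
  assert (Hlim : is_lim_seq (fun m => psum (fun j => z ^ j * fn (fst x) (snd x) m j) n)
                   (gen_psum z (fun k => f k x) n)).
  { apply (is_lim_seq_psum (fun m j => z ^ j * fn (fst x) (snd x) m j)); intros j.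
    apply (is_lim_seq_scal_l _ (z ^ j) (f j x)), f_is_lim, Hx. }
  apply (is_lim_seq_incr_n _ N) in Hlim; revert Hlim; apply is_lim_seq_Rle_const; intros m.
  rewrite (psum_ext _ (fun j => z ^ j * bern_convs (poisson_pmf (fst x)) (snd x) (m + N) j))
    by (intros; rewrite fn_bern_convs; auto).
  eapply Rle_trans.
  { apply (gen_psum_bern_convs z _ _ _ _ (exp (- (1 - z) * fst x)) Hz
             (poisson_pmf_in01 _ Hl) Hp).
    intros; apply gen_psum_poisson; auto; apply Hz. }
  rewrite <- exp_plus; apply exp_le_exp.
  pose proof (psum_le_psum (snd x) N (m + N) (fun i => proj1 (Hp i)) ltac:(lia)); nra.
Qed.

Lemma f_psum_le_1 x n : in_nabla x -> psum (fun k => f k x) n <= 1.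
Proof.
  intros Hx; rewrite <- gen_psum_one.
  pose proof (f_gen_psum_le 1 x 0 n ltac:(lra) Hx).
  replace (- (1 - 1) * (fst x + psum (snd x) 0)) with 0 in H by ring.
  rewrite exp_0 in H; auto.
Qed.

Lemma f_gen_term_le z k x N : 0 <= z <= 1 -> in_nabla x ->
  z ^ k * f k x <= exp (- (1 - z) * (fst x + psum (snd x) N)).
Proof.
  intros Hz Hx; eapply Rle_trans; [|apply (f_gen_psum_le z x N (S k) Hz Hx)].
  apply (psum_ge_term (fun j => z ^ j * f j x)); [|lia].
  intros; apply Rmult_le_pos; [apply pow_le, Hz | apply f_in01, Hx].
Qed.

Lemma f_zero_point k : f k zero_point = match k with O => 1 | S _ => 0 end.
Proof.
  assert (Hfn : forall n, fn 0 (fun _ => 0) n k = poisson_pmf 0 k).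
  { intros n; revert k; induction n as [|n IH]; intros k; simpl; auto.
    destruct k; rewrite IH; ring. }
  unfold f, zero_point; simpl.
  rewrite (Lim_seq_ext _ _ Hfn), Lim_seq_const; simpl; unfold poisson_pmf.
  destruct k; simpl; [rewrite Ropp_0, exp_0; field | unfold Rdiv; ring].
Qed.

(** * Likelihood-ratio dominance *)

Definition zext (g : nat -> R) (z : Z) : R := if (z <? 0)%Z then 0 else g (Z.to_nat z).

Lemma zext_neg g z : (z < 0)%Z -> zext g z = 0.
Proof. intros H; unfold zext; replace (z <? 0)%Z with true; auto; symmetry; apply Z.ltb_lt; auto. Qed.

Lemma zext_of_nat g n : zext g (Z.of_nat n) = g n.
Proof.
  unfold zext; replace (Z.of_nat n <? 0)%Z with false by (symmetry; apply Z.ltb_ge; lia).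
  rewrite Nat2Z.id; auto.
Qed.

Lemma zext_pred g n : zext g (Z.of_nat n - 1) = delay g n.
Proof.
  destruct n as [|n]; [apply zext_neg; lia|].
  replace (Z.of_nat (S n) - 1)%Z with (Z.of_nat n) by lia; exact (zext_of_nat g n).
Qed.

Lemma zext_nonneg g z : (forall k, 0 <= g k) -> 0 <= zext g z.
Proof. intros H; unfold zext; destruct (z <? 0)%Z; auto; lra. Qed.

Lemma zext_bern_conv q g z : zext (bern_conv q g) z = (1 - q) * zext g z + q * zext g (z - 1).
Proof.
  destruct (Z_lt_le_dec z 0); [rewrite !zext_neg by lia; ring|].
  replace z with (Z.of_nat (Z.to_nat z)) by lia.
  rewrite zext_pred, !zext_of_nat; reflexivity.
Qed.

(* [lr_dominates g h]: for every shift [s >= 0], [k |-> h (k - s) / g k] is nondecreasing on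
   the integers (both sequences extended by 0), written without division.  With [g = h] and
   [s = 1] it is log-concavity. *)
Definition lr_dominates (g h : nat -> R) : Prop :=
  forall s i j : Z, (0 <= s)%Z -> (i <= j)%Z ->
  zext h (i - s) * zext g j <= zext h (j - s) * zext g i.

Lemma lr_dominates_bern_conv g h p q : (forall k, 0 <= g k) -> (forall k, 0 <= h k) ->
  0 <= p -> p <= q -> q <= 1 -> lr_dominates g h -> lr_dominates (bern_conv p g) (bern_conv q h).
Proof.
  intros Hg Hh Hp Hpq Hq HM s i j Hs Hij; rewrite !zext_bern_conv.
  destruct (Z.eq_dec i j) as [<- | Hne]; [lra|].
  set (ai := zext h (i - s)); set (aj := zext h (j - s)).
  set (bi := zext h (i - s - 1)); set (bj := zext h (j - s - 1)).
  set (gi := zext g i); set (gj := zext g j).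
  set (ci := zext g (i - 1)); set (cj := zext g (j - 1)).
  assert (Hpos : forall z, 0 <= zext g z /\ 0 <= zext h z)
    by (intros; split; apply zext_nonneg; auto).
  assert (Hag : ai * gj <= aj * gi) by (apply HM; lia).
  assert (Hbc : bi * cj <= bj * ci).
  { unfold bi, cj, bj, ci.
    replace (i - s - 1)%Z with (i - 1 - s)%Z by lia.
    replace (j - s - 1)%Z with (j - 1 - s)%Z by lia; apply HM; lia. }
  assert (Hbg : bi * gj <= bj * gi).
  { unfold bi, bj.
    replace (i - s - 1)%Z with (i - (s + 1))%Z by lia.
    replace (j - s - 1)%Z with (j - (s + 1))%Z by lia; apply HM; lia. }
  assert (Hcross : 0 <= (1 - q) * p * (aj * ci - ai * cj) + q * (1 - p) * (bj * gi - bi * gj)).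
  { destruct (Z.eq_dec s 0) as [-> | Hs0].
    - (* only the unshifted case needs [p <= q] *)
      assert (Hbg_ac : bi * gj <= aj * ci).
      { unfold bi, aj, ci; replace (i - 0 - 1)%Z with (i - 1 - 0)%Z by lia; apply HM; lia. }
      assert (Hac_bg : ai * cj <= bj * gi).
      { unfold ai, cj, bj; replace (j - 0 - 1)%Z with (j - 1 - 0)%Z by lia; apply HM; lia. }
      replace ((1 - q) * p * (aj * ci - ai * cj) + q * (1 - p) * (bj * gi - bi * gj))
        with ((1 - q) * p * ((aj * ci - bi * gj) + (bj * gi - ai * cj))
              + (q - p) * (bj * gi - bi * gj)) by ring.
      apply Rplus_le_le_0_compat; apply Rmult_le_pos; try apply Rmult_le_pos; lra.
    - assert (Hac : ai * cj <= aj * ci).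
      { unfold ai, aj, ci, cj.
        replace (i - s)%Z with (i - 1 - (s - 1))%Z by lia.
        replace (j - s)%Z with (j - 1 - (s - 1))%Z by lia; apply HM; lia. }
      apply Rplus_le_le_0_compat; apply Rmult_le_pos; try apply Rmult_le_pos; lra. }
  assert (Hdiag : 0 <= (1 - q) * (1 - p) * (aj * gi - ai * gj) + q * p * (bj * ci - bi * cj))
    by (apply Rplus_le_le_0_compat; apply Rmult_le_pos; try apply Rmult_le_pos; lra).
  nra.
Qed.

Lemma lr_dominates_bern_convs g h p q n : in01 g -> in01 h -> in01 p -> in01 q ->
  (forall i, p i <= q i) -> lr_dominates g h -> lr_dominates (bern_convs g p n) (bern_convs h q n).
Proof.
  intros Hg Hh Hp Hq Hpq HM; induction n; simpl; auto.
  apply lr_dominates_bern_conv; auto; try apply Hp; try apply Hq.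
  - intros; apply (bern_convs_in01 g p n Hg Hp).
  - intros; apply (bern_convs_in01 h q n Hh Hq).
Qed.

Lemma fact_add_mul_le a i d : (a <= i)%nat ->
  (Factorial.fact (a + d) * Factorial.fact i <= Factorial.fact a * Factorial.fact (i + d))%nat.
Proof.
  intros H; induction d as [|d IH]; [rewrite !Nat.add_0_r; lia|].
  rewrite !Nat.add_succ_r; cbn [Factorial.fact].
  replace (S (a + d) * Factorial.fact (a + d) * Factorial.fact i)%nat
    with (S (a + d) * (Factorial.fact (a + d) * Factorial.fact i))%nat by ring.
  replace (Factorial.fact a * (S (i + d) * Factorial.fact (i + d)))%nat
    with (S (i + d) * (Factorial.fact a * Factorial.fact (i + d)))%nat by ring.
  apply Nat.mul_le_mono; lia.
Qed.

Lemma poisson_pmf_ratio_le l l' a i d : 0 <= l -> l <= l' -> (a <= i)%nat ->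
  poisson_pmf l' a * poisson_pmf l (i + d) <= poisson_pmf l' (a + d) * poisson_pmf l i.
Proof.
  intros Hl Hll' Hai; unfold poisson_pmf; rewrite !pow_add.
  pose proof (INR_fact_lt_0 a); pose proof (INR_fact_lt_0 i).
  pose proof (INR_fact_lt_0 (a + d)); pose proof (INR_fact_lt_0 (i + d)).
  set (K := exp (- l') * l' ^ a * (exp (- l) * l ^ i)).
  assert (HK : 0 <= K).
  { pose proof (exp_pos (- l')); pose proof (exp_pos (- l)).
    pose proof (pow_le l' a ltac:(lra)); pose proof (pow_le l i Hl).
    unfold K; apply Rmult_le_pos; apply Rmult_le_pos; lra. }
  replace (exp (- l') * l' ^ a / INR (Factorial.fact a)
           * (exp (- l) * (l ^ i * l ^ d) / INR (Factorial.fact (i + d))))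
    with (K * (l ^ d * / (INR (Factorial.fact a) * INR (Factorial.fact (i + d)))))
    by (unfold K; field; lra).
  replace (exp (- l') * (l' ^ a * l' ^ d) / INR (Factorial.fact (a + d))
           * (exp (- l) * l ^ i / INR (Factorial.fact i)))
    with (K * (l' ^ d * / (INR (Factorial.fact (a + d)) * INR (Factorial.fact i))))
    by (unfold K; field; lra).
  apply Rmult_le_compat_l; auto.
  apply Rmult_le_compat.
  - apply pow_le; auto.
  - left; apply Rinv_0_lt_compat, Rmult_lt_0_compat; auto.
  - apply pow_incr; lra.
  - apply Rinv_le_contravar; [apply Rmult_lt_0_compat; auto|].
    rewrite <- !mult_INR; apply le_INR, fact_add_mul_le; auto.
Qed.

Lemma lr_dominates_poisson l l' : 0 <= l -> l <= l' -> lr_dominates (poisson_pmf l) (poisson_pmf l').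
Proof.
  intros Hl Hll' s i j Hs Hij.
  destruct (Z_lt_le_dec (i - s) 0).
  - rewrite (zext_neg _ (i - s)), Rmult_0_l by auto.
    apply Rmult_le_pos; apply zext_nonneg; intros; apply poisson_pmf_nonneg; lra.
  - set (a := Z.to_nat (i - s)); set (m := Z.to_nat i); set (d := Z.to_nat (j - i)).
    assert (Ea : (i - s)%Z = Z.of_nat a) by (unfold a; lia).
    assert (Ead : (j - s)%Z = Z.of_nat (a + d)) by (unfold a, d; lia).
    assert (Emd : j = Z.of_nat (m + d)) by (unfold m, d; lia).
    assert (Em : i = Z.of_nat m) by (unfold m; lia).
    rewrite Ea, Ead, Emd, Em, !zext_of_nat.
    apply poisson_pmf_ratio_le; auto; unfold a, m; lia.
Qed.

Lemma is_lim_seq_zext (u : nat -> nat -> R) (v : nat -> R) z :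
  (forall j, is_lim_seq (fun n => u n j) (v j)) -> is_lim_seq (fun n => zext (u n) z) (zext v z).
Proof. intros H; unfold zext; destruct (z <? 0)%Z; [apply is_lim_seq_const | apply H]. Qed.

Lemma f_lr_dominates x x' : in_nabla x -> in_nabla x' -> ple x x' ->
  lr_dominates (fun k => f k x) (fun k => f k x').
Proof.
  intros Hx Hx' [Hl Hp] s i j Hs Hij.
  pose proof (nabla_lambda x Hx) as Hl0; pose proof (nabla_lambda x' Hx') as Hl0'.
  apply (is_lim_seq_Rle
           (fun n => zext (fn (fst x') (snd x') n) (i - s) * zext (fn (fst x) (snd x) n) j)
           (fun n => zext (fn (fst x') (snd x') n) (j - s) * zext (fn (fst x) (snd x) n) i));
    try (apply is_lim_seq_mult'; apply is_lim_seq_zext; intros; apply f_is_lim; auto).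
  intros n.
  assert (HM : lr_dominates (fn (fst x) (snd x) n) (fn (fst x') (snd x') n)).
  { intros s' i' j' Hs' Hij'; unfold zext; rewrite !fn_bern_convs.
    apply (lr_dominates_bern_convs _ _ _ _ n
             (poisson_pmf_in01 _ Hl0) (poisson_pmf_in01 _ Hl0')
             (nabla_in01 x Hx) (nabla_in01 x' Hx') Hp (lr_dominates_poisson _ _ Hl0 Hl)); auto. }
  apply HM; auto.
Qed.

Lemma f_ratio_monotone x x' i j : in_nabla x -> in_nabla x' -> ple x x' -> (i <= j)%nat ->
  f i x' * f j x <= f j x' * f i x.
Proof.
  intros Hx Hx' Hle Hij.
  pose proof (f_lr_dominates x x' Hx Hx' Hle 0%Z (Z.of_nat i) (Z.of_nat j) ltac:(lia) ltac:(lia)).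
  rewrite !Z.sub_0_r, !zext_of_nat in H; auto.
Qed.

Lemma f_log_concave x i j : in_nabla x -> (i <= j)%nat ->
  fpred i x * f j x <= fpred j x * f i x.
Proof.
  intros Hx Hij.
  assert (Hle : ple x x) by (split; [lra | intros; lra]).
  pose proof (f_lr_dominates x x Hx Hx Hle 1%Z (Z.of_nat i) (Z.of_nat j) ltac:(lia) ltac:(lia)).
  rewrite !zext_pred, !zext_of_nat in H.
  destruct i, j; auto.
Qed.

(** * Continuity of f *)

Definition tail_mass (x : point) (N : nat) : R := fst x + (Series (snd x) - psum (snd x) N).

(* The law of [x] with the Bernoulli variables of index [>= N] replaced by a Poisson variable
   of the same mean. *)
Definition poissonized (x : point) (N : nat) : nat -> R :=
  bern_convs (poisson_pmf (tail_mass x N)) (snd x) N.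

Lemma tail_mass_nonneg x N : in_nabla x -> 0 <= tail_mass x N.
Proof.
  intros Hx; unfold tail_mass.
  pose proof (nabla_lambda x Hx).
  pose proof (psum_le_Series (snd x) N (nabla_summable x Hx) (fun i => proj1 (nabla_in01 x Hx i))).
  lra.
Qed.

Lemma fn_poissonize_tail_le x N d k C : in_nabla x -> Series (snd x) <= C ->
  Rabs (fn (fst x) (snd x) (N + d) k
        - bern_convs (poisson_pmf (fst x + (psum (snd x) (N + d) - psum (snd x) N))) (snd x) N k)
  <= 2 * C * C / INR (S N).
Proof.
  intros Hx HC.
  pose proof (nabla_lambda x Hx) as Hl; pose proof (nabla_in01 x Hx) as Hp.
  pose proof (nabla_decreasing x Hx) as Hd; pose proof (nabla_summable x Hx) as Hs.
  set (p := snd x) in *.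
  assert (Hpos : forall i, 0 <= p i) by (intros; apply Hp).
  pose proof (decreasing_le_Series_div p N C Hd Hs Hpos HC).
  rewrite fn_bern_convs.
  eapply Rle_trans; [apply bern_convs_poissonize_tail; auto|].
  pose proof (psum_sq_tail_le p N d Hd Hp).
  pose proof (psum_le_Series p (N + d) Hs Hpos).
  pose proof (psum_nonneg p N Hpos); pose proof (psum_le_psum p N (N + d) Hpos ltac:(lia)).
  pose proof (Hpos N).
  assert (0 <= C) by (pose proof (psum_nonneg p (N + d) Hpos); lra).
  apply Rle_trans with (2 * (p N * C)); [nra|].
  replace (2 * C * C / INR (S N)) with (2 * (C / INR (S N) * C))
    by (field; apply not_0_INR; lia).
  nra.
Qed.

Lemma poissonized_approx x N k C : in_nabla x -> Series (snd x) <= C ->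
  Rabs (f k x - poissonized x N k) <= 2 * C * C / INR (S N).
Proof.
  intros Hx HC; unfold poissonized.
  pose proof (nabla_in01 x Hx) as Hp; pose proof (nabla_summable x Hx) as Hs.
  set (mass := fun d => fst x + (psum (snd x) (N + d) - psum (snd x) N)).
  assert (Hmass : forall d, 0 <= mass d).
  { intros d; pose proof (nabla_lambda x Hx).
    pose proof (psum_le_psum (snd x) N (N + d) (fun i => proj1 (Hp i)) ltac:(lia)).
    unfold mass; cbv beta; lra. }
  assert (Hmass_lim : is_lim_seq mass (tail_mass x N)).
  { apply is_lim_seq_plus'; [apply is_lim_seq_const|].
    apply is_lim_seq_minus'; [|apply is_lim_seq_const].
    apply (is_lim_seq_ext (fun d => psum (snd x) (d + N))); [intros; f_equal; lia|].
    apply (is_lim_seq_incr_n (psum (snd x))), is_lim_seq_psum_Series; auto. }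
  apply is_lim_seq_Rle_const with
    (fun d => Rabs (fn (fst x) (snd x) (N + d) k - bern_convs (poisson_pmf (mass d)) (snd x) N k)).
  - intros d; apply fn_poissonize_tail_le; auto.
  - apply (is_lim_seq_abs _ (Finite (f k x - _))), is_lim_seq_minus'.
    + apply (is_lim_seq_ext (fun d => fn (fst x) (snd x) (d + N) k)); [intros; f_equal; lia|].
      apply (is_lim_seq_incr_n (fun n => fn (fst x) (snd x) n k)), f_is_lim; auto.
    + apply is_lim_seq_of_Rabs_le with (fun d => Rabs (mass d - tail_mass x N)).
      * intros d; apply bern_convs_nonexpansive; auto; intros j.
        apply poisson_pmf_lipschitz; auto; apply tail_mass_nonneg; auto.
      * replace (Finite 0) with (Rbar_abs (tail_mass x N - tail_mass x N))
          by (rewrite Rminus_diag; simpl; rewrite Rabs_R0; auto).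
        apply is_lim_seq_abs, is_lim_seq_minus'; auto; apply is_lim_seq_const.
Qed.

Lemma poissonized_lipschitz x y N k : in_nabla x -> in_nabla y ->
  Rabs (poissonized x N k - poissonized y N k)
  <= Rabs (tail_mass x N - tail_mass y N) + psum (fun i => Rabs (snd x i - snd y i)) N.
Proof.
  intros Hx Hy; unfold poissonized.
  pose proof (tail_mass_nonneg x N Hx); pose proof (tail_mass_nonneg y N Hy).
  apply bern_convs_lipschitz; auto using poisson_pmf_in01, nabla_in01.
  intros; apply poisson_pmf_lipschitz; auto.
Qed.

Lemma f_dist_le x y N k C : in_nabla x -> in_nabla y ->
  Series (snd x) <= C -> Series (snd y) <= C ->
  Rabs (f k x - f k y) <= 4 * C * C / INR (S N)
    + (Rabs (tail_mass x N - tail_mass y N) + psum (fun i => Rabs (snd x i - snd y i)) N).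
Proof.
  intros Hx Hy HCx HCy.
  pose proof (poissonized_approx x N k C Hx HCx).
  pose proof (poissonized_approx y N k C Hy HCy).
  pose proof (poissonized_lipschitz x y N k Hx Hy).
  set (u := poissonized x N k) in *; set (v := poissonized y N k) in *.
  replace (f k x - f k y) with ((f k x - u) + (u - v) + (v - f k y)) by ring.
  replace (4 * C * C / INR (S N)) with (2 * C * C / INR (S N) + 2 * C * C / INR (S N))
    by (field; apply not_0_INR; lia).
  pose proof (Rabs_triang (f k x - u + (u - v)) (v - f k y)).
  pose proof (Rabs_triang (f k x - u) (u - v)).
  rewrite (Rabs_minus_sym v) in *; lra.
Qed.

(** * Compactness *)

Lemma bounded_seq_convergent_selection (v : nat -> R) a b : (forall n, a <= v n <= b) ->
  exists (phi : nat -> nat) (L : R),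
    (forall n, (n <= phi n)%nat) /\ is_lim_seq (fun n => v (phi n)) L.
Proof.
  intros Hv.
  destruct (Bolzano_Weierstrass v (fun c => a <= c <= b) (compact_P3 a b) Hv) as [L HL].
  assert (H : forall n, exists m, (n <= m)%nat /\ Rabs (v m - L) < / INR (S n)).
  { intros n.
    assert (Hpos : 0 < / INR (S n)) by (apply Rinv_0_lt_compat, lt_0_INR; lia).
    destruct (HL (disc L (mkposreal _ Hpos)) n) as [m [Hm Hd]];
      [exists (mkposreal _ Hpos); intros y Hy; exact Hy | exists m; split; [exact Hm | exact Hd]]. }
  destruct (choice _ H) as [phi Hphi].
  exists phi, L; split; [intros n; apply Hphi|].
  apply is_lim_seq_of_Rabs_le with (fun n => / INR (S n)); [|apply is_lim_seq_inv_S].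
  intros n; left; apply Hphi.
Qed.

Section DiagonalSelection.

Variable u : nat -> nat -> R.
Variable sel : nat -> (nat -> nat) -> nat -> nat.
Hypothesis sel_ge : forall i psi n, (n <= sel i psi n)%nat.
Hypothesis sel_lim : forall i psi, exists L : R, is_lim_seq (fun n => u i (psi (sel i psi n))) L.

(* [iter_sel i] is the [i]-th refinement: along it [u 0], ..., [u i] all converge. *)
Fixpoint iter_sel (i : nat) : nat -> nat :=
  match i with
  | O => sel 0 (fun n => n)
  | S i' => fun n => iter_sel i' (sel (S i') (iter_sel i') n)
  end.

Lemma iter_sel_lim i : exists L : R, is_lim_seq (fun n => u i (iter_sel i n)) L.
Proof. destruct i; simpl; [exact (sel_lim 0 (fun n => n)) | apply sel_lim]. Qed.

Lemma iter_sel_ge i n : (n <= iter_sel i n)%nat.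
Proof.
  revert n; induction i as [|i IH]; intros n; simpl; [apply sel_ge|].
  pose proof (sel_ge (S i) (iter_sel i) n); specialize (IH (sel (S i) (iter_sel i) n)); lia.
Qed.

Lemma iter_sel_refines i d n : exists m, (n <= m)%nat /\ iter_sel (i + d) n = iter_sel i m.
Proof.
  revert n; induction d as [|d IH]; intros n; [exists n; rewrite Nat.add_0_r; auto|].
  rewrite Nat.add_succ_r; simpl.
  destruct (IH (sel (S (i + d)) (iter_sel (i + d)) n)) as [m [Hm ->]].
  exists m; split; auto; pose proof (sel_ge (S (i + d)) (iter_sel (i + d)) n); lia.
Qed.

Lemma diagonal_sel_lim i : exists L : R, is_lim_seq (fun n => u i (iter_sel n n)) L.
Proof.
  destruct (iter_sel_lim i) as [L HL]; exists L.
  apply is_lim_seq_spec in HL; apply is_lim_seq_spec; intros eps.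
  destruct (HL eps) as [M HM]; exists (i + M)%nat; intros n Hn.
  destruct (iter_sel_refines i (n - i) n) as [m [Hm Heq]].
  replace (i + (n - i))%nat with n in Heq by lia.
  rewrite Heq; apply HM; lia.
Qed.

End DiagonalSelection.

Lemma diagonal_selection (u : nat -> nat -> R) B : (forall i j, 0 <= u i j <= B) ->
  exists (phi : nat -> nat) (L : nat -> R),
    (forall n, (n <= phi n)%nat) /\ forall i, is_lim_seq (fun n => u i (phi n)) (L i).
Proof.
  intros Hu.
  destruct (choice (fun (ip : nat * (nat -> nat)) th =>
              (forall n, (n <= th n)%nat) /\
              exists L : R, is_lim_seq (fun n => u (fst ip) (snd ip (th n))) L)) as [sel Hsel].
  { intros [i psi].
    destruct (bounded_seq_convergent_selection (fun n => u i (psi n)) 0 B) as [th [L [H1 H2]]];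
      [intros; apply Hu | exists th; eauto]. }
  set (sel' := fun i psi => sel (i, psi)).
  assert (Hge : forall i psi n, (n <= sel' i psi n)%nat) by (intros i psi; apply (Hsel (i, psi))).
  destruct (choice _ (diagonal_sel_lim u sel' Hge (fun i psi => proj2 (Hsel (i, psi)))))
    as [L HL].
  exists (fun n => iter_sel sel' n n), L; split; auto.
  intros n; apply (iter_sel_ge sel' Hge).
Qed.

Section LimitPoint.

Variables (ys : nat -> point) (lam sig : R) (p : nat -> R).
Hypothesis ys_nabla : forall n, in_nabla (ys n).
Hypothesis lam_lim : is_lim_seq (fun n => fst (ys n)) lam.
Hypothesis sig_lim : is_lim_seq (fun n => Series (snd (ys n))) sig.
Hypothesis p_lim : forall i, is_lim_seq (fun n => snd (ys n) i) (p i).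

Lemma limit_in01 : in01 p.
Proof.
  intros i; split;
    [apply (is_lim_seq_Rge_const (fun n => snd (ys n) i)) |
     apply (is_lim_seq_Rle_const (fun n => snd (ys n) i))];
    auto; intros n; apply (nabla_in01 _ (ys_nabla n)).
Qed.

Lemma limit_psum_le N : psum p N <= sig.
Proof.
  apply (is_lim_seq_Rle (fun n => psum (snd (ys n)) N) (fun n => Series (snd (ys n))));
    auto using is_lim_seq_psum.
  intros n; apply psum_le_Series; [apply nabla_summable | apply nabla_in01]; auto.
Qed.

Lemma limit_summable : ex_series p /\ Series p <= sig.
Proof.
  destruct (ex_finite_lim_seq_incr (psum p) sig) as [L HL].
  - intros n; pose proof (limit_in01 n); simpl; lra.
  - apply limit_psum_le.
  - assert (Hp : ex_series p).
    { exists L; apply (is_lim_seq_incr_1 (psum p)) in HL.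
      apply (is_lim_seq_ext _ (sum_n p)) in HL; auto; intros; apply psum_sum_n. }
    split; auto.
    apply (is_lim_seq_Rle_const (psum p)); auto using limit_psum_le, is_lim_seq_psum_Series.
Qed.

Definition limit_point : point := (lam + sig - Series p, p).

Lemma limit_point_in_nabla : in_nabla limit_point.
Proof.
  destruct limit_summable as [Hs HS].
  assert (Hlam : 0 <= lam)
    by (apply (is_lim_seq_Rge_const _ _ 0 (fun n => nabla_lambda _ (ys_nabla n)) lam_lim)).
  repeat split; try lra; try apply limit_in01; auto.
  intros i; apply (is_lim_seq_Rle (fun n => snd (ys n) (S i)) (fun n => snd (ys n) i)); auto.
  intros n; apply (nabla_decreasing _ (ys_nabla n)).
Qed.

Lemma f_is_lim_limit_point C : (forall n, Series (snd (ys n)) <= C) ->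
  forall k, is_lim_seq (fun n => f k (ys n)) (f k limit_point).
Proof.
  intros HC k.
  assert (HCx : Series p <= C).
  { destruct limit_summable as [_ HS].
    pose proof (is_lim_seq_Rle_const _ _ C HC sig_lim); lra. }
  apply (is_lim_seq_of_approx _ _ (fun N => 4 * C * C / INR (S N))
           (fun N n => Rabs (tail_mass (ys n) N - tail_mass limit_point N)
                       + psum (fun i => Rabs (snd (ys n) i - snd limit_point i)) N)).
  - intros N n; apply f_dist_le; auto using limit_point_in_nabla.
  - replace (Finite 0) with (Finite (4 * C * C * 0)) by (f_equal; ring).
    apply (is_lim_seq_ext (fun N => 4 * C * C * / INR (S N))); [intros; reflexivity|].
    apply (is_lim_seq_scal_l _ _ 0), is_lim_seq_inv_S.
  - intros N.
    replace (Finite 0) with (Finite (Rabs 0 + psum (fun _ => Rabs 0) N))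
      by (rewrite Rabs_R0, psum_zero; f_equal; ring).
    apply is_lim_seq_plus'.
    + apply (is_lim_seq_abs _ 0).
      replace 0 with (lam + (sig - psum p N) - tail_mass limit_point N)
        by (unfold tail_mass, limit_point; simpl; ring).
      apply is_lim_seq_minus'; [|apply is_lim_seq_const].
      apply is_lim_seq_plus'; auto; apply is_lim_seq_minus'; auto using is_lim_seq_psum.
    + apply is_lim_seq_psum; intros i; apply (is_lim_seq_abs _ 0).
      replace 0 with (p i - p i) by ring.
      apply is_lim_seq_minus'; auto; apply is_lim_seq_const.
Qed.

End LimitPoint.

Lemma nabla_seq_compact (ys : nat -> point) C :
  (forall n, in_nabla (ys n)) -> (forall n N, fst (ys n) + psum (snd (ys n)) N <= C) ->
  exists (phi : nat -> nat) (x : point),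
    (forall n, (n <= phi n)%nat) /\ in_nabla x /\
    forall k, is_lim_seq (fun n => f k (ys (phi n))) (f k x).
Proof.
  intros Hys HC.
  assert (HSer : forall n, 0 <= Series (snd (ys n)) <= C).
  { intros n; split; [apply nabla_Series_nonneg; auto|].
    apply (is_lim_seq_Rle_const (psum (snd (ys n)))); [|apply is_lim_seq_psum_Series, nabla_summable; auto].
    intros N; pose proof (HC n N); pose proof (nabla_lambda _ (Hys n)); lra. }
  set (u := fun i n => match i with
                       | O => fst (ys n)
                       | 1%nat => Series (snd (ys n))
                       | S (S i') => snd (ys n) i' end).
  destruct (diagonal_selection u (C + 1)) as [phi [L [Hphi HL]]].
  { intros [|[|i]] n; simpl.
    - pose proof (HC n 0%nat); pose proof (nabla_lambda _ (Hys n)); simpl in *; lra.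
    - pose proof (HSer n); lra.
    - pose proof (nabla_in01 _ (Hys n) i); pose proof (HSer n); lra. }
  set (zs := fun n => ys (phi n)).
  exists phi, (limit_point (L 0%nat) (L 1%nat) (fun i => L (S (S i)))); split; auto.
  split.
  - exact (limit_point_in_nabla zs _ _ _ (fun n => Hys (phi n)) (HL 0%nat) (HL 1%nat)
             (fun i => HL (S (S i)))).
  - apply (f_is_lim_limit_point zs _ _ _ (fun n => Hys (phi n)) (HL 0%nat) (HL 1%nat)
             (fun i => HL (S (S i))) C).
    intros; apply HSer.
Qed.

Lemma nabla_mass_le_of_f_ge x k c N : in_nabla x -> 0 < c -> c <= f k x ->
  fst x + psum (snd x) N <= -2 * ln ((/ 2) ^ k * c).
Proof.
  intros Hx Hc Hf.
  pose proof (f_gen_term_le (/ 2) k x N ltac:(lra) Hx) as H.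
  assert (Hz : 0 < (/ 2) ^ k) by (apply pow_lt; lra).
  assert (H1 : (/ 2) ^ k * c <= exp (- (1 - / 2) * (fst x + psum (snd x) N))).
  { eapply Rle_trans; [apply Rmult_le_compat_l; [lra | apply Hf] | apply H]. }
  apply ln_le in H1; [|apply Rmult_lt_0_compat; auto].
  rewrite ln_exp in H1; lra.
Qed.

Lemma exists_maximising_seq {A : Type} (P : A -> Prop) (F : A -> R) a0 B :
  P a0 -> (forall a, P a -> F a <= B) ->
  exists (s : R) (ys : nat -> A),
    (forall a, P a -> F a <= s) /\ (forall n, P (ys n) /\ F a0 <= F (ys n)) /\
    is_lim_seq (fun n => F (ys n)) s.
Proof.
  intros Ha0 HB.
  set (E := fun r => exists a, P a /\ r = F a).
  destruct (completeness E) as [s [Hub Hlub]].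
  { exists B; intros r [a [Pa ->]]; auto. }
  { exists (F a0), a0; auto. }
  assert (Hup : forall a, P a -> F a <= s) by (intros a Pa; apply Hub; exists a; auto).
  assert (Hnear : forall n, exists a, (P a /\ F a0 <= F a) /\ s - / INR (S n) < F a).
  { intros n.
    assert (Hpos : 0 < / INR (S n)) by (apply Rinv_0_lt_compat, lt_0_INR; lia).
    assert (Ha : exists a, P a /\ s - / INR (S n) < F a).
    { apply NNPP; intros Hne.
      assert (Hb : is_upper_bound E (s - / INR (S n))).
      { intros r [a [Pa ->]]; apply Rnot_lt_le; intros Hlt; apply Hne; exists a; auto. }
      specialize (Hlub _ Hb); lra. }
    destruct Ha as [a [Pa Ha]].
    destruct (Rle_dec (F a0) (F a)); [exists a | exists a0]; repeat split; auto; lra. }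
  destruct (choice _ Hnear) as [ys Hys].
  exists s, ys; split; [|split]; auto; [intros; apply Hys|].
  apply is_lim_seq_of_Rabs_le with (fun n => / INR (S n)); [|apply is_lim_seq_inv_S].
  intros n; destruct (Hys n) as [[Pn _] Hn]; pose proof (Hup _ Pn).
  apply Rabs_le; lra.
Qed.

Lemma directed_exists_mplus P k : directed P -> exists y, P y /\ is_mplus y k.
Proof.
  intros [H0 HD]; induction k as [|k [y [Py Hy]]].
  - exists zero_point; split; auto; unfold is_mplus; simpl; rewrite !f_zero_point; lra.
  - destruct (proj1 (HD k) y Py Hy) as [y' [Py' [_ [Hy' _]]]]; exists y'; auto.
Qed.

Lemma closed_directed_max_attained P k : (forall x, P x -> in_nabla x) ->
  closed_fam P -> directed P -> exists x, P x /\ forall y, P y -> f k y <= f k x.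
Proof.
  intros Hn Hcl HD.
  destruct (directed_exists_mplus P k HD) as [y0 [Py0 [_ Hy0]]].
  assert (Hc : 0 < f k y0) by (pose proof (f_in01 y0 (Hn y0 Py0) (S k)); lra).
  destruct (exists_maximising_seq P (f k) y0 1 Py0) as [s [ys [Hup [Hys Hlim]]]].
  { intros y Py; apply (f_in01 y (Hn y Py)). }
  destruct (nabla_seq_compact ys (-2 * ln ((/ 2) ^ k * f k y0))) as [phi [x [Hphi [Hx Hconv]]]].
  - intros n; apply Hn, Hys.
  - intros n N; apply nabla_mass_le_of_f_ge; auto; [apply Hn|]; apply Hys.
  - assert (Px : P x) by (apply (Hcl (fun n => ys (phi n))); auto; intros; apply Hys).
    exists x; split; auto.
    replace (f k x) with s; auto.
    apply (is_lim_seq_R_unique (fun n => f k (ys (phi n)))); auto.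
    apply (is_lim_seq_subseq (fun n => f k (ys n))); auto.
    intros Q [N HN]; exists N; intros n HNn; apply HN; specialize (Hphi n); lia.
Qed.

(** * Modes of a maximiser *)

Lemma exists_strict_descent (g : nat -> R) k : (forall j, 0 <= g j) ->
  (forall n, psum g n <= 1) -> 0 < g k -> exists j, g (S j) < g j.
Proof.
  intros Hpos Hsum Hk; apply NNPP; intros Hne.
  assert (Hinc : forall j, g j <= g (S j))
    by (intros j; apply Rnot_lt_le; intros Hlt; apply Hne; exists j; auto).
  assert (Hge : forall M, g k <= g (k + M)%nat).
  { induction M; [rewrite Nat.add_0_r; lra|].
    rewrite Nat.add_succ_r; specialize (Hinc (k + M)%nat); lra. }
  assert (Hmass : forall M, INR M * g k <= psum g (k + M)).
  { induction M; [simpl; rewrite Rmult_0_l; apply psum_nonneg; auto|].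
    rewrite Nat.add_succ_r, psum_S, S_INR; specialize (Hge M); lra. }
  destruct (archimed (/ g k)) as [Har _].
  set (M := Z.to_nat (up (/ g k))).
  assert (HM : / g k < INR M).
  { pose proof (Rinv_0_lt_compat _ Hk).
    unfold M; rewrite INR_IZR_INZ, Z2Nat.id; [lra | apply le_IZR; lra]. }
  apply Rmult_lt_compat_r with (r := g k) in HM; auto.
  rewrite Rinv_l in HM by lra.
  pose proof (Hmass M); pose proof (Hsum (k + M)%nat); lra.
Qed.

Lemma exists_first_strict_descent (g : nat -> R) j : g (S j) < g j ->
  exists m, g (S m) < g m /\ forall i, (i < m)%nat -> g i <= g (S i).
Proof.
  induction j as [j IH] using (well_founded_induction lt_wf); intros Hj.
  destruct (classic (forall i, (i < j)%nat -> g i <= g (S i))) as [H | H]; [exists j; auto|].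
  apply not_all_ex_not in H; destruct H as [i Hi].
  apply imply_to_and in Hi; destruct Hi as [Hij Hi]; apply (IH i Hij); lra.
Qed.

Lemma unimodal_le_peak (g : nat -> R) m :
  (forall j, (j < m)%nat -> g j <= g (S j)) -> (forall j, (m <= j)%nat -> g (S j) <= g j) ->
  forall j, g j <= g m.
Proof.
  intros Hup Hdown.
  assert (Hleft : forall d, (d <= m)%nat -> g (m - d)%nat <= g m).
  { induction d as [|d IH]; intros Hd; [rewrite Nat.sub_0_r; lra|].
    specialize (Hup (m - S d)%nat ltac:(lia)).
    replace (S (m - S d)) with (m - d)%nat in Hup by lia; specialize (IH ltac:(lia)); lra. }
  assert (Hright : forall d, g (m + d)%nat <= g m).
  { induction d as [|d IH]; [rewrite Nat.add_0_r; lra|].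
    rewrite Nat.add_succ_r; specialize (Hdown (m + d)%nat ltac:(lia)); lra. }
  intros j; destruct (le_lt_dec j m).
  - replace j with (m - (m - j))%nat by lia; apply Hleft; lia.
  - replace j with (m + (j - m))%nat by lia; apply Hright.
Qed.

Lemma exists_mplus_of_f_pos x k : in_nabla x -> 0 < f k x -> exists m, is_mplus x m.
Proof.
  intros Hx Hk.
  destruct (exists_strict_descent (fun j => f j x) k) as [j Hj];
    auto using f_psum_le_1; [intros; apply f_in01, Hx|].
  destruct (exists_first_strict_descent (fun j => f j x) j Hj) as [m [Hm Hfirst]].
  exists m; split; auto.
  destruct m as [|m]; simpl; [apply f_in01, Hx | apply (Hfirst m); lia].
Qed.

(* [f(.; x)] is log-concave, hence unimodal. *)
Lemma mplus_is_mode x m : in_nabla x -> is_mplus x m -> is_mode x m.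
Proof.
  intros Hx [Hprev Hnext].
  pose proof (f_in01 x Hx) as H01.
  assert (Hm : 0 < f m x) by (pose proof (H01 (S m)); lra).
  red; apply (unimodal_le_peak (fun j => f j x)).
  - intros j Hj.
    pose proof (f_log_concave x (S j) m Hx Hj); simpl in H.
    pose proof (H01 (S j)).
    assert (f j x * f m x <= f (S j) x * f m x) by nra.
    apply Rmult_le_reg_r with (f m x); auto.
  - intros j Hj.
    pose proof (f_log_concave x (S m) (S j) Hx ltac:(lia)); simpl in H.
    pose proof (H01 j).
    assert (f (S j) x * f m x <= f j x * f m x) by nra.
    apply Rmult_le_reg_r with (f m x); auto.
Qed.

Lemma mplus_gt_cases x m k : is_mplus x m -> (k < m)%nat ->
  (fpred m x = f m x /\ k = Nat.pred m) \/ exists k', (k <= k')%nat /\ is_mminus x (S k').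
Proof.
  intros Hm Hkm.
  destruct (Req_dec (fpred m x) (f m x)) as [He | He].
  - destruct (Nat.eq_dec k (Nat.pred m)) as [-> | Hk]; [left; auto|].
    right; exists (m - 2)%nat; split; [lia|].
    exists m; split; auto; left; split; auto; lia.
  - right; exists (Nat.pred m); split; [lia|].
    exists m; split; auto; right; split; auto; lia.
Qed.

Section Maximiser.

Variables (P : point -> Prop) (k : nat) (x : point).
Hypothesis P_nabla : forall y, P y -> in_nabla y.
Hypothesis P_directed : directed P.
Hypothesis Px : P x.
Hypothesis x_max : forall y, P y -> f k y <= f k x.

Lemma maximiser_f_pos : 0 < f k x.
Proof.
  destruct (directed_exists_mplus P k P_directed) as [y [Py [_ Hy]]].
  pose proof (x_max y Py); pose proof (f_in01 y (P_nabla y Py) (S k)); lra.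
Qed.

Lemma maximiser_mplus_ge m : is_mplus x m -> (k <= m)%nat.
Proof.
  intros Hm; destruct (le_lt_dec k m) as [| Hmk]; auto; exfalso.
  destruct (proj1 (proj2 P_directed m) x Px Hm) as [x' [Px' [Hle [_ Hup]]]].
  pose proof (f_ratio_monotone x x' (S m) k (P_nabla x Px) (P_nabla x' Px') Hle Hmk).
  pose proof (x_max x' Px'); pose proof (f_in01 x (P_nabla x Px) (S m)).
  pose proof maximiser_f_pos.
  assert (f k x' * f (S m) x <= f k x * f (S m) x) by nra.
  assert (f (S m) x * f k x < f (S m) x' * f k x) by nra.
  lra.
Qed.

Lemma maximiser_mminus_le k' : is_mminus x (S k') -> (k' < k)%nat.
Proof.
  intros Hm; destruct (le_lt_dec k k') as [Hkk |]; auto; exfalso.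
  destruct (proj2 (proj2 P_directed k') x Px Hm) as [x' [Px' [Hle [_ Hup]]]].
  pose proof (f_ratio_monotone x' x k k' (P_nabla x' Px') (P_nabla x Px) Hle Hkk).
  pose proof (x_max x' Px'); pose proof (f_in01 x (P_nabla x Px) k').
  pose proof maximiser_f_pos.
  assert (f k' x * f k x' <= f k' x * f k x) by nra.
  assert (f k' x * f k x < f k' x' * f k x) by nra.
  lra.
Qed.

Lemma maximiser_is_mode : is_mode x k.
Proof.
  pose proof (P_nabla x Px) as Hx.
  destruct (exists_mplus_of_f_pos x k Hx maximiser_f_pos) as [m Hm].
  pose proof (mplus_is_mode x m Hx Hm) as Hmode.
  pose proof (maximiser_mplus_ge m Hm) as Hkm.
  destruct (Nat.eq_dec k m) as [<- | Hne]; auto.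
  destruct (mplus_gt_cases x m k Hm ltac:(lia)) as [[Heq ->] | [k' [Hkk' Hmm]]].
  - destruct m as [|m]; [lia|]; intros j; simpl in *; rewrite Heq; apply Hmode.
  - pose proof (maximiser_mminus_le k' Hmm); lia.
Qed.

End Maximiser.

Theorem theorem3 (P : point -> Prop) :
  (forall x, P x -> in_nabla x) ->
  closed_fam P -> directed P -> cross_modal P.
Proof.
  intros Hn Hcl HD k; split.
  - apply closed_directed_max_attained; auto.
  - intros x Px Hmax; apply (maximiser_is_mode P); auto.
Qed.
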